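(* For any alphabet $\Sigma$, the category of (nondeterministic) automata on $\Sigma$ is a quasitopos.
   Context: An automaton on an alphabet $\Sigma$ is a set $X$ together with a function $\delta:\Sigma\times X\to 2^X$. A morphism from $\delta:\Sigma\times X\to 2^X$ to $\delta':\Sigma\times X'\to 2^{X'}$ is a function $f:X\to X'$ such that $f(\delta(\alpha,x))\subseteq\delta'(\alpha,f(x))$ for all $\alpha\in\Sigma$, $x\in X$. *)

From Stdlib Require Import ProofIrrelevance.

Set Implicit Arguments.

Record Category := {
  Ob :> Type;
  Hom : Ob -> Ob -> Type;
  idm : forall A, Hom A A;
  comp : forall A B C, Hom B C -> Hom A B -> Hom A C;
  comp_id_l : forall A B (f : Hom A B), comp (idm B) f = f;
  comp_id_r : forall A B (f : Hom A B), comp f (idm A) = f;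
  comp_assoc : forall A B C D (h : Hom C D) (g : Hom B C) (f : Hom A B),
      comp h (comp g f) = comp (comp h g) f
}.

Arguments Hom {c} _ _.
Arguments idm {c} _.
Arguments comp {c A B C} _ _.

Section CatNotions.
Variable C : Category.

Definition mono {A B : C} (m : Hom A B) : Prop :=
  forall Z (g h : Hom Z A), comp m g = comp m h -> g = h.

Definition epi {A B : C} (e : Hom A B) : Prop :=
  forall Z (g h : Hom B Z), comp g e = comp h e -> g = h.

Definition strong_mono {S D : C} (m : Hom S D) : Prop :=
  mono m /\
  forall (A B : C) (e : Hom A B) (u : Hom A S) (v : Hom B D),
    epi e -> comp v e = comp m u ->
    exists! d : Hom B S, comp d e = u /\ comp m d = v.

Definition is_terminal (T : C) : Prop := forall X : C, exists! f : Hom X T, True.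
Definition is_initial (I : C) : Prop := forall X : C, exists! f : Hom I X, True.

Definition is_pullback {A B Z P : C} (f : Hom A Z) (g : Hom B Z)
  (p1 : Hom P A) (p2 : Hom P B) : Prop :=
  comp f p1 = comp g p2 /\
  forall (Q : C) (q1 : Hom Q A) (q2 : Hom Q B), comp f q1 = comp g q2 ->
    exists! u : Hom Q P, comp p1 u = q1 /\ comp p2 u = q2.

Definition is_pushout {Z A B P : C} (f : Hom Z A) (g : Hom Z B)
  (i1 : Hom A P) (i2 : Hom B P) : Prop :=
  comp i1 f = comp i2 g /\
  forall (Q : C) (q1 : Hom A Q) (q2 : Hom B Q), comp q1 f = comp q2 g ->
    exists! u : Hom P Q, comp u i1 = q1 /\ comp u i2 = q2.

Definition is_product {A B P : C} (p1 : Hom P A) (p2 : Hom P B) : Prop :=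
  forall (Q : C) (q1 : Hom Q A) (q2 : Hom Q B),
    exists! u : Hom Q P, comp p1 u = q1 /\ comp p2 u = q2.

Definition finitely_complete : Prop :=
  (exists T : C, is_terminal T) /\
  forall (A B Z : C) (f : Hom A Z) (g : Hom B Z),
    exists (P : C) (p1 : Hom P A) (p2 : Hom P B), is_pullback f g p1 p2.

Definition finitely_cocomplete : Prop :=
  (exists I : C, is_initial I) /\
  forall (Z A B : C) (f : Hom Z A) (g : Hom Z B),
    exists (P : C) (i1 : Hom A P) (i2 : Hom B P), is_pushout f g i1 i2.

Definition has_binary_products : Prop :=
  forall A B : C, exists (P : C) (p1 : Hom P A) (p2 : Hom P B), is_product p1 p2.

(** exponential B^A : an object E, a product P = E x A and ev : P -> B
    such that every f : Z x A -> B factors as ev o (g x id_A) for a unique g *)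
Definition is_exponential (A B E : C) : Prop :=
  exists (P : C) (p1 : Hom P E) (p2 : Hom P A) (ev : Hom P B),
    is_product p1 p2 /\
    forall (Z ZA : C) (q1 : Hom ZA Z) (q2 : Hom ZA A) (f : Hom ZA B),
      is_product q1 q2 ->
      exists! g : Hom Z E,
        exists h : Hom ZA P,
          comp p1 h = comp g q1 /\ comp p2 h = q2 /\ comp ev h = f.

Definition cartesian_closed : Prop :=
  (exists T : C, is_terminal T) /\ has_binary_products /\
  forall A B : C, exists E : C, is_exponential A B E.

Definition has_strong_subobject_classifier : Prop :=
  exists (One Omega : C) (tru : Hom One Omega),
    is_terminal One /\
    forall (S D : C) (m : Hom S D), strong_mono m ->
      exists! chi : Hom D Omega,
        exists t : Hom S One, is_pullback chi tru m t.

End CatNotions.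

Section Slice.
Variables (C : Category) (A : C).

Definition slice_ob := { X : C & Hom X A }.
Definition slice_hom (x y : slice_ob) :=
  { h : Hom (projT1 x) (projT1 y) | comp (projT2 y) h = projT2 x }.

Definition slice_id (x : slice_ob) : slice_hom x x :=
  exist _ (idm (projT1 x)) (comp_id_r C _ _ (projT2 x)).

Definition slice_comp (x y z : slice_ob) (g : slice_hom y z) (f : slice_hom x y)
  : slice_hom x z.
Proof.
  exists (comp (proj1_sig g) (proj1_sig f)).
  rewrite comp_assoc, (proj2_sig g). exact (proj2_sig f).
Defined.

Lemma slice_hom_eq (x y : slice_ob) (f g : slice_hom x y) :
  proj1_sig f = proj1_sig g -> f = g.
Proof.
  destruct f as [f Hf], g as [g Hg]; simpl; intros ->.
  f_equal; apply proof_irrelevance.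
Qed.

Definition Slice : Category.
Proof.
  refine {| Ob := slice_ob; Hom := slice_hom; idm := slice_id;
            comp := slice_comp |}.
  - intros; apply slice_hom_eq; simpl; apply comp_id_l.
  - intros; apply slice_hom_eq; simpl; apply comp_id_r.
  - intros; apply slice_hom_eq; simpl; apply comp_assoc.
Defined.
End Slice.

Definition locally_cartesian_closed (C : Category) : Prop :=
  forall A : C, cartesian_closed (Slice C A).

Definition quasitopos (C : Category) : Prop :=
  finitely_complete C /\ finitely_cocomplete C /\
  locally_cartesian_closed C /\ has_strong_subobject_classifier C.

(** * Nondeterministic automata on an alphabet Sigma.
    An automaton is a set X with delta : Sigma x X -> 2^X; here 2^X is
    represented as X -> Prop, so [delta a x y] means y \in delta(a, x). *)
Record automaton (Sigma : Type) := {
  states : Type;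
  delta : Sigma -> states -> states -> Prop
}.

Definition aut_hom (Sigma : Type) (M N : automaton Sigma) :=
  { f : states M -> states N |
    forall (a : Sigma) (x y : states M), delta M a x y -> delta N a (f x) (f y) }.

Definition aut_id (Sigma : Type) (M : automaton Sigma) : aut_hom M M :=
  exist (fun f : states M -> states M =>
    forall a x y, delta M a x y -> delta M a (f x) (f y)) (fun x => x) (fun a x y H => H).

Definition aut_comp (Sigma : Type) (M N P : automaton Sigma)
  (g : aut_hom N P) (f : aut_hom M N) : aut_hom M P :=
  exist (fun h : states M -> states P =>
    forall a x y, delta M a x y -> delta P a (h x) (h y))
    (fun x => proj1_sig g (proj1_sig f x))
    (fun a x y H => proj2_sig g a _ _ (proj2_sig f a x y H)).

Lemma aut_hom_eq (Sigma : Type) (M N : automaton Sigma) (f g : aut_hom M N) :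
  proj1_sig f = proj1_sig g -> f = g.
Proof.
  destruct f as [f Hf], g as [g Hg]; simpl; intros ->.
  f_equal; apply proof_irrelevance.
Qed.

Definition AutCat (Sigma : Type) : Category.
Proof.
  refine {| Ob := automaton Sigma; Hom := @aut_hom Sigma;
            idm := @aut_id Sigma; comp := @aut_comp Sigma |};
  intros; apply aut_hom_eq; reflexivity.
Defined.

(* An automaton is a set with one binary relation per letter, and every construction
   is the one for sets, with the transitions forced by the universal property.
   Finite limits are taken on states with componentwise transitions; a pushout is a
   quotient of the disjoint union, carrying the image of the transitions of the
   summands.  In the slice over [A], the exponential of [x] and [y] has over a state
   [a] of [A] the maps from the fibre of [x] to the fibre of [y]; there is an
   [s]-transition between two such maps iff they lie over an [s]-transition of [A]
   and send [s]-transitions of [x] to [s]-transitions of [y].  A strong monomorphism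
   is an injection that reflects transitions (an induced subautomaton), hence the
   preimage of [True] under a map into [Prop] equipped with all transitions. *)

From Stdlib Require Import ProofIrrelevance FunctionalExtensionality PropExtensionality
  ClassicalEpsilon Relation_Operators.

Set Implicit Arguments.

Section SliceConstructions.
Variable C : Category.

Lemma slice_id_terminal (A : C) :
  is_terminal (Slice C A) (existT (fun X : C => Hom X A) A (idm A)).
Proof.
  intros [X f].
  exists (exist (fun h => comp (idm A) h = f) f (comp_id_l C _ _ f)).
  split; [exact I|].
  intros [g Hg] _; apply slice_hom_eq; simpl in *.
  rewrite comp_id_l in Hg; symmetry; exact Hg.
Qed.

Section PullbackSliceProduct.
Variables (A : C) (x y : slice_ob C A) (P : C).
Variables (p1 : Hom P (projT1 x)) (p2 : Hom P (projT1 y)).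
Hypothesis square : comp (projT2 x) p1 = comp (projT2 y) p2.

Definition pullback_slice : slice_ob C A := existT _ P (comp (projT2 x) p1).

Definition pullback_slice_fst : slice_hom pullback_slice x := exist _ p1 eq_refl.

Definition pullback_slice_snd : slice_hom pullback_slice y := exist _ p2 (eq_sym square).

Lemma pullback_slice_product :
  is_pullback C (projT2 x) (projT2 y) p1 p2 ->
  is_product (Slice C A) pullback_slice_fst pullback_slice_snd.
Proof.
  intros [_ univ] [Q q] [q1 Hq1] [q2 Hq2]; simpl in *.
  destruct (univ Q q1 q2) as [u [[Hu1 Hu2] Hu]]; [congruence|].
  assert (Hu_over : comp (comp (projT2 x) p1) u = q)
    by (rewrite <- comp_assoc, Hu1; exact Hq1).
  exists (exist _ u Hu_over).
  split; [split; apply slice_hom_eq; assumption|].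
  intros [u' Hu'] [E1 E2].
  apply (f_equal (@proj1_sig _ _)) in E1, E2; simpl in E1, E2.
  apply slice_hom_eq, Hu; split; assumption.
Qed.

End PullbackSliceProduct.

(* Any product of [Z] and [A] is isomorphic to [prod Z], so the chosen products suffice. *)
Lemma is_exponential_of_chosen_products (A B E : C) (prod : C -> C)
    (pr1 : forall Z, Hom (prod Z) Z) (pr2 : forall Z, Hom (prod Z) A)
    (ev : Hom (prod E) B) :
  (forall Z, is_product C (pr1 Z) (pr2 Z)) ->
  (forall Z (f : Hom (prod Z) B),
     exists! g : Hom Z E, exists h : Hom (prod Z) (prod E),
       comp (pr1 E) h = comp g (pr1 Z) /\ comp (pr2 E) h = pr2 Z /\ comp ev h = f) ->
  is_exponential C A B E.
Proof.
  intros prod_product curry_unique.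
  exists (prod E), (pr1 E), (pr2 E), ev; split; [apply prod_product|].
  intros Z ZA q1 q2 f Hq.
  destruct (prod_product Z ZA q1 q2) as [m [[Hm1 Hm2] _]].
  destruct (Hq (prod Z) (pr1 Z) (pr2 Z)) as [k [[Hk1 Hk2] _]].
  assert (Hkm : comp k m = idm ZA).
  { destruct (Hq ZA q1 q2) as [i [_ Hi]].
    transitivity i; [symmetry|]; apply Hi; split.
    - rewrite comp_assoc, Hk1; exact Hm1.
    - rewrite comp_assoc, Hk2; exact Hm2.
    - apply comp_id_r.
    - apply comp_id_r. }
  destruct (curry_unique Z (comp f k)) as [g [[h [Hh1 [Hh2 Hev]]] Hg]].
  exists g; split.
  - exists (comp h m); split; [|split].
    + rewrite comp_assoc, Hh1, <- comp_assoc, Hm1; reflexivity.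
    + rewrite comp_assoc, Hh2; exact Hm2.
    + rewrite comp_assoc, Hev, <- comp_assoc, Hkm; apply comp_id_r.
  - intros g' [h' [H1 [H2 H3]]]; apply Hg.
    exists (comp h' k); split; [|split].
    + rewrite comp_assoc, H1, <- comp_assoc, Hk1; reflexivity.
    + rewrite comp_assoc, H2; exact Hk2.
    + rewrite comp_assoc, H3; reflexivity.
Qed.

End SliceConstructions.

Section Quotient.
Variables (X : Type) (R : X -> X -> Prop).

Definition quotient := { P : X -> Prop | exists x, P = clos_refl_sym_trans X R x }.

Definition class_of (x : X) : quotient :=
  exist _ (clos_refl_sym_trans X R x) (ex_intro _ x eq_refl).

Lemma class_of_eq (x y : X) : class_of x = class_of y <-> clos_refl_sym_trans X R x y.
Proof.
  split.
  - intros E; apply (f_equal (@proj1_sig _ _)) in E; simpl in E.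
    rewrite E; apply rst_refl.
  - intros Hxy; apply subset_eq_compat.
    apply functional_extensionality; intros z; apply propositional_extensionality.
    split; intros Hz; [apply rst_trans with x; [apply rst_sym|]|apply rst_trans with y]; assumption.
Qed.

Definition repr (c : quotient) : X :=
  proj1_sig (constructive_indefinite_description _ (proj2_sig c)).

Lemma class_of_repr (c : quotient) : class_of (repr c) = c.
Proof.
  destruct c as [P HP]; unfold repr; simpl.
  destruct constructive_indefinite_description as [x Hx]; simpl.
  apply subset_eq_compat; symmetry; exact Hx.
Qed.

Definition quotient_lift (W : Type) (h : X -> W) (c : quotient) : W := h (repr c).

Lemma quotient_lift_class (W : Type) (h : X -> W) :
  (forall x y, R x y -> h x = h y) -> forall x, quotient_lift h (class_of x) = h x.
Proof.
  intros h_compat x.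
  assert (h_closure : forall y z, clos_refl_sym_trans X R y z -> h y = h z)
    by (induction 1; congruence || auto).
  apply h_closure, class_of_eq, class_of_repr.
Qed.

End Quotient.

Section Automata.
Variable Sigma : Type.
Local Notation Aut := (AutCat Sigma).

Definition hom_fun (M N : Aut) (f : Hom M N) : states M -> states N := proj1_sig f.
#[warnings="-uniform-inheritance"]
Coercion hom_fun : Hom >-> Funclass.

Definition aut_map (M N : Aut) (h : states M -> states N)
    (h_delta : forall a x y, delta M a x y -> delta N a (h x) (h y)) : Hom M N :=
  exist _ h h_delta.
Arguments aut_map {M N} & h h_delta.

Lemma hom_ext (M N : Aut) (f g : Hom M N) : (forall x, f x = g x) -> f = g.
Proof. intros H; apply aut_hom_eq, functional_extensionality, H. Qed.

Lemma hom_congr (M N : Aut) (f g : Hom M N) : f = g -> forall x, f x = g x.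
Proof. intros ->; reflexivity. Qed.

Lemma hom_delta (M N : Aut) (f : Hom M N) a x y : delta M a x y -> delta N a (f x) (f y).
Proof. exact (proj2_sig f a x y). Qed.
Arguments hom_delta {M N} f {a x y} _.

Definition terminal : Aut := {| states := unit; delta := fun (_ : Sigma) _ _ => True |}.

Definition to_terminal (M : Aut) : Hom M terminal := aut_map (fun _ => tt) (fun _ _ _ _ => I).

Lemma terminal_is_terminal : is_terminal Aut terminal.
Proof.
  intros M; exists (to_terminal M); split; [exact I|].
  intros g _; apply hom_ext; intros x; destruct (g x); reflexivity.
Qed.

Definition initial : Aut := {| states := Empty_set; delta := fun (_ : Sigma) _ _ => False |}.

Definition from_initial (M : Aut) : Hom initial M :=
  aut_map (fun e : Empty_set => match e with end) (fun _ e _ _ => match e with end).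

Lemma initial_is_initial : is_initial Aut initial.
Proof.
  intros M; exists (from_initial M); split; [exact I|].
  intros g _; apply hom_ext; intros [].
Qed.

Definition point : Aut := {| states := unit; delta := fun (_ : Sigma) _ _ => False |}.

Definition point_at {M : Aut} (m : states M) : Hom point M :=
  aut_map (fun _ => m) (fun _ _ _ H => match H with end).

Lemma mono_injective (M N : Aut) (m : Hom M N) :
  mono Aut m -> forall x y, m x = m y -> x = y.
Proof.
  intros m_mono x y E.
  assert (Hxy : point_at x = point_at y)
    by (apply m_mono, hom_ext; intros ?; exact E).
  exact (hom_congr Hxy tt).
Qed.

Section Pullback.
Variables (X Y Z : Aut) (f : Hom X Z) (g : Hom Y Z).

Definition pullback : Aut :=
  {| states := { p : states X * states Y | f (fst p) = g (snd p) };
     delta a p q := delta X a (fst (proj1_sig p)) (fst (proj1_sig q)) /\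
                    delta Y a (snd (proj1_sig p)) (snd (proj1_sig q)) |}.

Definition pullback_fst : Hom pullback X :=
  aut_map (fun p => fst (proj1_sig p)) (fun _ _ _ H => proj1 H).

Definition pullback_snd : Hom pullback Y :=
  aut_map (fun p => snd (proj1_sig p)) (fun _ _ _ H => proj2 H).

Lemma pullback_square : comp f pullback_fst = comp g pullback_snd.
Proof. apply hom_ext; intros [p Hp]; exact Hp. Qed.

Definition pullback_pt (x : states X) (y : states Y) (H : f x = g y) : states pullback :=
  exist (fun p => f (fst p) = g (snd p)) (x, y) H.

Definition pullback_pair (Q : Aut) (q1 : Hom Q X) (q2 : Hom Q Y) (E : comp f q1 = comp g q2) :
  Hom Q pullback :=
  aut_map (fun w => pullback_pt (q1 w) (q2 w) (hom_congr E w))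
    (fun a w w' H => conj (hom_delta q1 H) (hom_delta q2 H)).

Lemma pullback_is_pullback : is_pullback Aut f g pullback_fst pullback_snd.
Proof.
  split; [exact pullback_square|].
  intros Q q1 q2 E.
  exists (pullback_pair E).
  split; [split; apply hom_ext; reflexivity|].
  intros u [<- <-]; apply hom_ext; intros w.
  apply eq_sig_hprop; [intros; apply proof_irrelevance|].
  symmetry; apply surjective_pairing.
Qed.

End Pullback.
Arguments pullback_pt {X Y Z f g x y} H.

Lemma aut_finitely_complete : finitely_complete Aut.
Proof.
  split; [exists terminal; exact terminal_is_terminal|].
  intros X Y Z f g; exists (pullback f g), (pullback_fst f g), (pullback_snd f g).
  apply pullback_is_pullback.
Qed.

Section Pushout.
Variables (Z X Y : Aut) (f : Hom Z X) (g : Hom Z Y).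

Definition glue (s t : states X + states Y) : Prop :=
  exists z, s = inl (f z) /\ t = inr (g z).

Definition sum_delta (a : Sigma) (s t : states X + states Y) : Prop :=
  match s, t with
  | inl x, inl x' => delta X a x x'
  | inr y, inr y' => delta Y a y y'
  | _, _ => False
  end.

Definition pushout : Aut :=
  {| states := quotient glue;
     delta a c d := exists s t, c = class_of glue s /\ d = class_of glue t /\ sum_delta a s t |}.

Definition pushout_inl : Hom X pushout :=
  aut_map (fun x => class_of glue (inl x))
    (fun a x x' H => ex_intro _ (inl x) (ex_intro _ (inl x') (conj eq_refl (conj eq_refl H)))).

Definition pushout_inr : Hom Y pushout :=
  aut_map (fun y => class_of glue (inr y))
    (fun a y y' H => ex_intro _ (inr y) (ex_intro _ (inr y') (conj eq_refl (conj eq_refl H)))).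

Section Copair.
Variables (W : Aut) (q1 : Hom X W) (q2 : Hom Y W).

Definition copair (s : states X + states Y) : states W :=
  match s with inl x => q1 x | inr y => q2 y end.

Lemma copair_delta a s t : sum_delta a s t -> delta W a (copair s) (copair t).
Proof. destruct s, t; simpl; try contradiction; apply hom_delta. Qed.

Hypothesis E : comp q1 f = comp q2 g.

Lemma copair_lift_class s : quotient_lift copair (class_of glue s) = copair s.
Proof. apply quotient_lift_class; intros ? ? [z [-> ->]]; exact (hom_congr E z). Qed.

Lemma copair_lift_delta a c d :
  delta pushout a c d -> delta W a (quotient_lift copair c) (quotient_lift copair d).
Proof.
  intros [s [t [-> [-> H]]]]; rewrite !copair_lift_class; exact (copair_delta _ _ _ H).
Qed.

Definition pushout_copair : Hom pushout W := aut_map (quotient_lift copair) copair_lift_delta.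

End Copair.

Lemma pushout_is_pushout : is_pushout Aut f g pushout_inl pushout_inr.
Proof.
  split.
  - apply hom_ext; intros z; apply class_of_eq, rst_step; exists z; split; reflexivity.
  - intros W q1 q2 E; exists (pushout_copair E).
    split; [split; apply hom_ext; intros ?; apply (copair_lift_class E)|].
    intros u [Hu1 Hu2]; apply hom_ext; intros c; simpl.
    rewrite <- (class_of_repr c), (copair_lift_class E); destruct (repr c) as [x|y].
    + symmetry; exact (hom_congr Hu1 x).
    + symmetry; exact (hom_congr Hu2 y).
Qed.

End Pushout.

Lemma aut_finitely_cocomplete : finitely_cocomplete Aut.
Proof.
  split; [exists initial; exact initial_is_initial|].
  intros Z X Y f g; exists (pushout f g), (pushout_inl f g), (pushout_inr f g).
  apply pushout_is_pushout.
Qed.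

Section StrongMonos.
Variables (X D : Aut) (m : Hom X D).

Definition induced : Aut := {| states := states X; delta a x y := delta D a (m x) (m y) |}.

(* [X -> induced] is bijective on states, hence epi; the diagonal fill-in of the square
   with [m] shows that [m] reflects transitions. *)
Lemma strong_mono_reflects_delta :
  strong_mono Aut m -> forall a x y, delta D a (m x) (m y) -> delta X a x y.
Proof.
  intros [_ m_strong] a x y H.
  pose (e := aut_map (M := X) (N := induced) (fun x => x) (fun _ _ _ H => hom_delta m H)).
  pose (v := aut_map (M := induced) (N := D) m (fun _ _ _ H => H)).
  destruct (m_strong X induced e (idm X) v) as [d [[Hd _] _]].
  - intros W h h' E; apply hom_ext; exact (hom_congr E).
  - apply hom_ext; reflexivity.
  - assert (d_id : forall z, d z = z) by exact (hom_congr Hd).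
    rewrite <- (d_id x), <- (d_id y); exact (hom_delta d H).
Qed.

End StrongMonos.

Definition Omega : Aut := {| states := Prop; delta := fun (_ : Sigma) _ _ => True |}.

Definition truth : Hom terminal Omega := aut_map (fun _ => True) (fun _ _ _ _ => I).

Definition char_map (X D : Aut) (m : Hom X D) : Hom D Omega :=
  aut_map (fun d => exists x, m x = d) (fun _ _ _ _ => I).

Lemma char_map_pullback (X D : Aut) (m : Hom X D) :
  strong_mono Aut m -> is_pullback Aut (char_map m) truth m (to_terminal X).
Proof.
  intros m_strong; split.
  - apply hom_ext; intros x; simpl; apply propositional_extensionality; split; [trivial|].
    intros _; exists x; reflexivity.
  - intros Q q1 q2 E.
    assert (q1_in_image : forall w, exists x, m x = q1 w)
      by (intros w; change (comp (char_map m) q1 w); rewrite (hom_congr E w); exact I).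
    pose (u w := proj1_sig (constructive_indefinite_description _ (q1_in_image w))).
    assert (Hu : forall w, m (u w) = q1 w)
      by (intros w; exact (proj2_sig (constructive_indefinite_description _ (q1_in_image w)))).
    assert (u_delta : forall a w w', delta Q a w w' -> delta X a (u w) (u w')).
    { intros a w w' H; apply (strong_mono_reflects_delta m_strong).
      rewrite !Hu; exact (hom_delta q1 H). }
    exists (aut_map u u_delta); split; [split|].
    + apply hom_ext; exact Hu.
    + apply hom_ext; intros w; destruct (q2 w); reflexivity.
    + intros u' [Hu' _]; apply hom_ext; intros w.
      apply (mono_injective (proj1 m_strong)); simpl.
      rewrite Hu; symmetry; exact (hom_congr Hu' w).
Qed.

Lemma char_map_unique (X D : Aut) (m : Hom X D) (chi : Hom D Omega) (t : Hom X terminal) :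
  is_pullback Aut chi truth m t -> chi = char_map m.
Proof.
  intros [square univ]; apply hom_ext; intros d; apply propositional_extensionality; split.
  - intros Hd.
    assert (E : comp chi (point_at d) = comp truth (to_terminal point)).
    { apply hom_ext; intros ?; apply propositional_extensionality; now split. }
    destruct (univ point (point_at d) (to_terminal point) E) as [u [[Hu _] _]].
    exists (u tt); exact (hom_congr Hu tt).
  - intros [x <-]; change (comp chi m x); rewrite (hom_congr square x); exact I.
Qed.

Lemma aut_strong_subobject_classifier : has_strong_subobject_classifier Aut.
Proof.
  exists terminal, Omega, truth; split; [exact terminal_is_terminal|].
  intros X D m m_strong; exists (char_map m); split.
  - exists (to_terminal X); exact (char_map_pullback m_strong).
  - intros chi [t Ht]; symmetry; exact (char_map_unique Ht).
Qed.

Section Slices.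
Variable A : Aut.
Local Notation Sl := (Slice Aut A).

Definition slice_map (x y : Sl) (h : Hom (projT1 x) (projT1 y))
    (h_over : forall w, projT2 y (h w) = projT2 x w) : Hom x y :=
  exist (fun h => comp (projT2 y) h = projT2 x) h (hom_ext (comp (projT2 y) h) (projT2 x) h_over).
Arguments slice_map {x y} & h h_over.

Lemma slice_hom_ext (x y : Sl) (f g : Hom x y) :
  (forall w, proj1_sig f w = proj1_sig g w) -> f = g.
Proof. intros H; apply slice_hom_eq, hom_ext, H. Qed.

Lemma slice_hom_congr (x y : Sl) (f g : Hom x y) :
  f = g -> forall w, proj1_sig f w = proj1_sig g w.
Proof. intros ->; reflexivity. Qed.

Lemma slice_hom_over (x y : Sl) (f : Hom x y) w : projT2 y (proj1_sig f w) = projT2 x w.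
Proof. exact (hom_congr (proj2_sig f) w). Qed.

Definition slice_prod (Z x : Sl) : Sl :=
  pullback_slice Z (pullback (projT2 Z) (projT2 x)) (pullback_fst _ _).

Definition slice_fst (Z x : Sl) : Hom (slice_prod Z x) Z := pullback_slice_fst _ _ _.

Definition slice_snd (Z x : Sl) : Hom (slice_prod Z x) x :=
  pullback_slice_snd Z x _ _ _ (pullback_square _ _).

Lemma slice_prod_is_product (Z x : Sl) : is_product Sl (slice_fst Z x) (slice_snd Z x).
Proof. exact (pullback_slice_product _ (pullback_is_pullback _ _)). Qed.

Section Exponential.
Variables x y : Sl.

(* The fibre of the exponential over [a] consists of the maps from the fibre of [x]
   over [a] to the fibre of [y] over [a], encoded by their graphs. *)
Record exp_state := {
  exp_base : states A;
  exp_graph : states (projT1 x) -> states (projT1 y) -> Prop;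
  exp_graph_dom : forall u v, exp_graph u v -> projT2 x u = exp_base;
  exp_graph_cod : forall u v, exp_graph u v -> projT2 y v = exp_base;
  exp_graph_total : forall u, projT2 x u = exp_base -> exists v, exp_graph u v;
  exp_graph_functional : forall u v v', exp_graph u v -> exp_graph u v' -> v = v'
}.

Lemma exp_state_eq (e e' : exp_state) :
  exp_base e = exp_base e' -> exp_graph e = exp_graph e' -> e = e'.
Proof.
  destruct e, e'; simpl; intros -> ->; f_equal; apply proof_irrelevance.
Qed.

Definition exp_aut : Aut :=
  {| states := exp_state;
     delta a e e' := delta A a (exp_base e) (exp_base e') /\
       forall u u' v v', exp_graph e u v -> exp_graph e' u' v' ->
         delta (projT1 x) a u u' -> delta (projT1 y) a v v' |}.

Definition exp_obj : Sl :=
  existT (fun X : Aut => Hom X A) exp_aut (aut_map exp_base (fun _ _ _ H => proj1 H)).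

Lemma eval_exists (p : states (projT1 (slice_prod exp_obj x))) :
  exists v, exp_graph (fst (proj1_sig p)) (snd (proj1_sig p)) v.
Proof. exact (exp_graph_total _ _ (eq_sym (proj2_sig p))). Qed.

Definition eval_fun (p : states (projT1 (slice_prod exp_obj x))) : states (projT1 y) :=
  proj1_sig (constructive_indefinite_description _ (eval_exists p)).

Lemma eval_spec p : exp_graph (fst (proj1_sig p)) (snd (proj1_sig p)) (eval_fun p).
Proof. exact (proj2_sig (constructive_indefinite_description _ (eval_exists p))). Qed.

Lemma eval_delta a p p' :
  delta (projT1 (slice_prod exp_obj x)) a p p' -> delta (projT1 y) a (eval_fun p) (eval_fun p').
Proof.
  intros [[_ graph_delta] Hx]; exact (graph_delta _ _ _ _ (eval_spec p) (eval_spec p') Hx).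
Qed.

Definition eval : Hom (slice_prod exp_obj x) y :=
  slice_map (aut_map eval_fun eval_delta) (fun p => exp_graph_cod _ _ _ (eval_spec p)).

Section Curry.
Variables (Z : Sl) (f : Hom (slice_prod Z x) y).

Definition curry_graph (z : states (projT1 Z)) u v : Prop :=
  exists H : projT2 Z z = projT2 x u, v = proj1_sig f (pullback_pt H).

Lemma curry_graph_dom z u v : curry_graph z u v -> projT2 x u = projT2 Z z.
Proof. intros [H _]; exact (eq_sym H). Qed.

Lemma curry_graph_cod z u v : curry_graph z u v -> projT2 y v = projT2 Z z.
Proof. intros [H ->]; exact (slice_hom_over f (pullback_pt H)). Qed.

Lemma curry_graph_total z u : projT2 x u = projT2 Z z -> exists v, curry_graph z u v.
Proof. intros Hu; exists (proj1_sig f (pullback_pt (eq_sym Hu))), (eq_sym Hu); reflexivity. Qed.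

Lemma curry_graph_functional z u v v' : curry_graph z u v -> curry_graph z u v' -> v = v'.
Proof. intros [H ->] [H' ->]; rewrite (proof_irrelevance _ H H'); reflexivity. Qed.

Definition curry_state (z : states (projT1 Z)) : exp_state :=
  {| exp_base := projT2 Z z;
     exp_graph := curry_graph z;
     exp_graph_dom := @curry_graph_dom z;
     exp_graph_cod := @curry_graph_cod z;
     exp_graph_total := @curry_graph_total z;
     exp_graph_functional := @curry_graph_functional z |}.

Lemma curry_delta a z z' :
  delta (projT1 Z) a z z' -> delta exp_aut a (curry_state z) (curry_state z').
Proof.
  intros Hz; split; [exact (hom_delta (projT2 Z) Hz)|].
  intros u u' v v' [H ->] [H' ->] Hu.
  exact (hom_delta (proj1_sig f) (x := pullback_pt H) (y := pullback_pt H') (conj Hz Hu)).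
Qed.

Definition curry : Hom Z exp_obj := slice_map (aut_map curry_state curry_delta) (fun _ => eq_refl).

Lemma eval_graph (g : Hom Z exp_obj) (h : Hom (slice_prod Z x) (slice_prod exp_obj x)) :
  comp (slice_fst exp_obj x) h = comp g (slice_fst Z x) ->
  comp (slice_snd exp_obj x) h = slice_snd Z x ->
  forall p, exp_graph (proj1_sig g (fst (proj1_sig p))) (snd (proj1_sig p))
                      (proj1_sig (comp eval h) p).
Proof.
  intros H1 H2 p.
  assert (E1 : fst (proj1_sig (proj1_sig h p)) = proj1_sig g (fst (proj1_sig p)))
    by exact (slice_hom_congr H1 p).
  assert (E2 : snd (proj1_sig (proj1_sig h p)) = snd (proj1_sig p))
    by exact (slice_hom_congr H2 p).
  rewrite <- E1, <- E2; exact (eval_spec (proj1_sig h p)).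
Qed.

Lemma curry_unique (g : Hom Z exp_obj) (h : Hom (slice_prod Z x) (slice_prod exp_obj x)) :
  comp (slice_fst exp_obj x) h = comp g (slice_fst Z x) ->
  comp (slice_snd exp_obj x) h = slice_snd Z x ->
  comp eval h = f -> g = curry.
Proof.
  intros H1 H2 Hev; apply slice_hom_ext; intros z; apply exp_state_eq.
  - exact (slice_hom_over g z).
  - apply functional_extensionality; intros u; apply functional_extensionality; intros v.
    apply propositional_extensionality; split.
    + intros Huv.
      assert (H : projT2 Z z = projT2 x u)
        by (rewrite <- (slice_hom_over g z); symmetry; exact (exp_graph_dom _ _ _ Huv)).
      exists H; rewrite <- (slice_hom_congr Hev).
      exact (exp_graph_functional _ _ _ _ Huv (eval_graph H1 H2 (pullback_pt H))).
    + intros [H ->]; rewrite <- (slice_hom_congr Hev); exact (eval_graph H1 H2 (pullback_pt H)).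
Qed.

Lemma curry_exists :
  exists h : Hom (slice_prod Z x) (slice_prod exp_obj x),
    comp (slice_fst exp_obj x) h = comp curry (slice_fst Z x) /\
    comp (slice_snd exp_obj x) h = slice_snd Z x /\ comp eval h = f.
Proof.
  destruct (@slice_prod_is_product exp_obj x _ (comp curry (slice_fst Z x)) (slice_snd Z x))
    as [h [[H1 H2] _]].
  exists h; split; [exact H1|split; [exact H2|]].
  apply slice_hom_ext; intros p.
  destruct (eval_graph H1 H2 p) as [H ->]; f_equal.
  apply eq_sig_hprop; [intros; apply proof_irrelevance|]; exact (eq_sym (surjective_pairing _)).
Qed.

End Curry.

Lemma exp_obj_is_exponential : is_exponential Sl x y exp_obj.
Proof.
  apply (is_exponential_of_chosen_products y exp_obj (fun Z => slice_prod Z x)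
           (fun Z => slice_fst Z x) (fun Z => slice_snd Z x) eval).
  - intros Z; apply slice_prod_is_product.
  - intros Z f; exists (curry f); split; [exact (curry_exists f)|].
    intros g [h [H1 [H2 Hev]]]; symmetry; exact (curry_unique H1 H2 Hev).
Qed.

End Exponential.

Lemma slice_cartesian_closed : cartesian_closed Sl.
Proof.
  split; [|split].
  - exists (existT (fun X : Aut => Hom X A) A (idm A)); apply slice_id_terminal.
  - intros Z x; exists (slice_prod Z x), (slice_fst Z x), (slice_snd Z x).
    apply slice_prod_is_product.
  - intros x y; exists (exp_obj x y); apply exp_obj_is_exponential.
Qed.

End Slices.

End Automata.

Theorem corollary1 (Sigma : Type) : quasitopos (AutCat Sigma).
Proof.
  split; [exact (aut_finitely_complete Sigma)|].
  split; [exact (aut_finitely_cocomplete Sigma)|].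
  split; [exact (@slice_cartesian_closed Sigma)|].
  exact (aut_strong_subobject_classifier Sigma).
Qed.
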